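(* Let $p,q\ge0$ be integers and $a_1,\dots,a_p,b_1,\dots,b_q>0$, and let $$F(x)={}_pF_q(a_1,\dots,a_p;b_1,\dots,b_q;x)=1+\sum_{n=1}^\infty\frac{\prod_{k=1}^p(a_k,n)}{\prod_{k=1}^q(b_k,n)}\frac{x^n}{n!},$$ considered on $(-1,1)$ (assuming the series converges there, i.e. $p\le q+1$). Then: (1) If $p=q=0$, then $F(x)=e^x$, which is log-convex. (2) Let $p=q\ge1$. If $a_k\le b_k$ for each $k$, with at least one strict inequality, then $F$ is strictly log-convex on $(0,1)$. If $a_k\ge b_k$ for each $k$, with at least one strict inequality, then $F$ is strictly log-concave on $(0,1)$. (3) If $p>q$ and $a_k\le b_k$ for $k=1,\dots,q$, with at least one strict inequality, then $F$ is strictly log-convex on $(0,1)$. (4) If $1\le p<q$ and $a_k\ge b_k$ for $k=1,\dots,p$, with at least one strict inequality, then $F$ is strictly log-concave on $(0,1)$. (5) If $p=0$ and $q\ge1$, then $F$ is log-concave on $(0,1)$.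
   Context: $(a,0)=1$ and $(a,n)=a(a+1)\cdots(a+n-1)$ for $n\ge1$. *)

From Stdlib Require Import Reals Lra Lia.
From Coquelicot Require Import Coquelicot.
Open Scope R_scope.

Fixpoint poch (a : R) (n : nat) : R :=
  match n with
  | O => 1
  | S m => poch a m * (a + INR m)
  end.

Fixpoint prodR (f : nat -> R) (n : nat) : R :=
  match n with
  | O => 1
  | S m => prodR f m * f m
  end.

(* n-th coefficient of pFq(a_1..a_p; b_1..b_q; x); parameters indexed
   a 0 .. a (p-1), b 0 .. b (q-1).  The n = 0 coefficient is 1. *)
Definition hypcoef (p q : nat) (a b : nat -> R) (n : nat) : R :=
  prodR (fun k => poch (a k) n) p / prodR (fun k => poch (b k) n) q
  / INR (Factorial.fact n).

Definition hypF (p q : nat) (a b : nat -> R) (x : R) : R :=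
  PSeries (hypcoef p q a b) x.

Definition log_convex_on (I : R -> Prop) (f : R -> R) : Prop :=
  (forall x, I x -> 0 < f x) /\
  forall x y t, I x -> I y -> 0 < t < 1 ->
    ln (f (t * x + (1 - t) * y)) <= t * ln (f x) + (1 - t) * ln (f y).

Definition strictly_log_convex_on (I : R -> Prop) (f : R -> R) : Prop :=
  (forall x, I x -> 0 < f x) /\
  forall x y t, I x -> I y -> x <> y -> 0 < t < 1 ->
    ln (f (t * x + (1 - t) * y)) < t * ln (f x) + (1 - t) * ln (f y).

Definition log_concave_on (I : R -> Prop) (f : R -> R) : Prop :=
  (forall x, I x -> 0 < f x) /\
  forall x y t, I x -> I y -> 0 < t < 1 ->
    t * ln (f x) + (1 - t) * ln (f y) <= ln (f (t * x + (1 - t) * y)).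

Definition strictly_log_concave_on (I : R -> Prop) (f : R -> R) : Prop :=
  (forall x, I x -> 0 < f x) /\
  forall x y t, I x -> I y -> x <> y -> 0 < t < 1 ->
    t * ln (f x) + (1 - t) * ln (f y) < ln (f (t * x + (1 - t) * y)).

Definition open01 (x : R) : Prop := 0 < x < 1.
Definition openm11 (x : R) : Prop := -1 < x < 1.

From Stdlib Require Import Reals Lra Lia ConstructiveEpsilon Classical_Prop.
From Coquelicot Require Import Coquelicot.
Open Scope R_scope.

(* For F x = sum c_n x^n with c_n > 0, the derivative of ln F is the quotient
   sum (n+1) c_(n+1) x^n / sum c_n x^n.  If the coefficient quotients
   rho_n = (n+1) c_(n+1) / c_n increase strictly, so does this quotient of power
   series on (0, 1): with lam its value at v, the series of (rho_n - lam) c_n v^n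
   vanishes, and since rho_n - lam changes sign only once, damping its terms by
   the decreasing factors (u/v)^n makes it negative.  Hence ln F is strictly
   convex by the mean value theorem, and strictly concave when rho_n decreases.
   For pFq, rho_n = prod (a_k + n) / prod (b_k + n); under each hypothesis of the
   theorem rho_n or 1/rho_n is a product of nondecreasing factors
   (x + n)/(y + n) with x <= y and of increasing factors (x + n), at least one of
   them strictly increasing.  The ratio test, using p <= q + 1, gives radius of
   convergence at least 1, and for p = q = 0 the series is that of exp. *)

Lemma pow_antimono (x : R) (m n : nat) : 0 <= x <= 1 -> (m <= n)%nat -> x ^ n <= x ^ m.
Proof.
  intros Hx Hmn; induction Hmn as [|n _ IH]; [lra|].
  simpl; assert (0 <= x ^ n) by (apply pow_le; lra); nra.
Qed.

Lemma Series_ge_term (w : nat -> R) (k : nat) :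
  ex_series w -> (forall n, 0 <= w n) -> w k <= Series w.
Proof.
  intros Hw Hpos.
  rewrite (Series_incr_n w (S k)) by (lia || exact Hw); simpl pred.
  assert (Htail : 0 <= Series (fun j => w (S k + j)%nat)).
  { rewrite <- (PSeries_const_0 0); unfold PSeries.
    apply Series_le; [intros n; rewrite Rmult_0_l; split; [lra | apply Hpos]|].
    now apply ex_series_incr_n. }
  destruct k as [|k]; cbn [sum_f_R0]; [lra|].
  assert (0 <= sum_f_R0 w k) by (apply cond_pos_sum; exact Hpos).
  lra.
Qed.

Lemma Series_lt (u v : nat -> R) (k : nat) :
  ex_series u -> ex_series v -> (forall n, u n <= v n) -> u k < v k ->
  Series u < Series v.
Proof.
  intros Hu Hv Hle Hk.
  assert (H := Series_ge_term (fun n => v n - u n) k (ex_series_minus _ _ Hv Hu)).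
  rewrite Series_minus in H by assumption.
  enough (v k - u k <= Series v - Series u) by lra.
  apply H; intros n; specialize (Hle n); lra.
Qed.

Lemma Series_damped_neg (r w : nat -> R) (x : R) :
  (forall n, 0 < w n) -> (forall n, r n < r (S n)) -> 0 < x < 1 ->
  ex_series (fun n => r n * w n) -> ex_series (fun n => r n * (w n * x ^ n)) ->
  Series (fun n => r n * w n) = 0 ->
  Series (fun n => r n * (w n * x ^ n)) < 0.
Proof.
  intros Hw Hr Hx Hex Hexx Hzero.
  assert (Hmono : forall m n, (m <= n)%nat -> r m <= r n).
  { intros m n Hmn; apply Rge_le, growing_prop; [intros k; left; apply Hr | exact Hmn]. }
  assert (Hpos : exists n, 0 < r n).
  { apply NNPP; intros Hnone.
    assert (Hle : forall n, r n <= 0) by (intros n; apply Rnot_lt_le; eauto).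
    assert (H0 := Series_ge_term (fun n => - (r n * w n)) 0 (ex_series_opp _ Hex)).
    rewrite Series_opp, Hzero in H0.
    assert (H1 : - (r 0%nat * w 0%nat) <= - 0).
    { apply H0; intros n; specialize (Hle n); specialize (Hw n); nra. }
    specialize (Hr 0%nat); specialize (Hle 1%nat); specialize (Hw 0%nat); nra. }
  destruct (epsilon_smallest (fun n => 0 < r n) (fun n => Rlt_dec 0 (r n)) Hpos)
    as [N [HN Hmin]].
  assert (Hcmp : forall n, r n * (w n * x ^ n) <= x ^ N * (r n * w n)).
  { intros n; specialize (Hw n).
    replace (r n * (w n * x ^ n)) with (r n * w n * x ^ n) by ring.
    rewrite (Rmult_comm (x ^ N)).
    destruct (Compare_dec.le_lt_dec N n) as [HNn | HnN].
    - assert (0 < r n) by (specialize (Hmono N n HNn); lra).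
      apply Rmult_le_compat_l; [nra | apply pow_antimono; [lra | exact HNn]].
    - assert (r n <= 0) by (apply Rnot_lt_le; intros H; specialize (Hmin n H); lia).
      apply Rmult_le_compat_neg_l; [nra | apply pow_antimono; [lra | lia]]. }
  assert (Hstrict : r (S N) * (w (S N) * x ^ S N) < x ^ N * (r (S N) * w (S N))).
  { assert (0 < r (S N)) by (specialize (Hr N); lra).
    assert (0 < x ^ N) by (apply pow_lt; lra).
    assert (0 < r (S N) * w (S N) * x ^ N)
      by (apply Rmult_lt_0_compat; [apply Rmult_lt_0_compat; auto | auto]).
    simpl; nra. }
  apply Rlt_le_trans with (Series (fun n => x ^ N * (r n * w n))).
  - apply (Series_lt _ _ (S N)); [exact Hexx | | exact Hcmp | exact Hstrict].
    exact (ex_series_scal_l (x ^ N) _ Hex).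
  - rewrite Series_scal_l, Hzero; lra.
Qed.

Lemma ex_series_of_radius (c : nat -> R) (x : R) :
  Rbar_lt (Rabs x) (CV_radius c) -> ex_series (fun n => c n * x ^ n).
Proof. intros H; now apply ex_pseries_R, CV_radius_inside. Qed.

Lemma PSeries_pos (c : nat -> R) (x : R) :
  (forall n, 0 < c n) -> 0 <= x -> Rbar_lt (Rabs x) (CV_radius c) -> 0 < PSeries c x.
Proof.
  intros Hc Hx Hr.
  apply Rlt_le_trans with (c 0%nat * x ^ 0); [simpl; rewrite Rmult_1_r; apply Hc|].
  apply (Series_ge_term (fun n => c n * x ^ n)); [now apply ex_series_of_radius|].
  intros n; apply Rmult_le_pos; [left; apply Hc | now apply pow_le].
Qed.

Lemma is_series_quotient_shift (c d : nat -> R) (lam z : R) :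
  (forall n, c n <> 0) -> Rbar_lt (Rabs z) (CV_radius c) -> Rbar_lt (Rabs z) (CV_radius d) ->
  is_series (fun n => (d n / c n - lam) * (c n * z ^ n)) (PSeries d z - lam * PSeries c z).
Proof.
  intros Hc Hzc Hzd.
  assert (E : forall n, d n * z ^ n - lam * (c n * z ^ n) = (d n / c n - lam) * (c n * z ^ n))
    by (intros n; field; apply Hc).
  apply (is_series_ext _ _ _ E).
  exact (is_series_minus _ _ _ _ (Series_correct _ (ex_series_of_radius d z Hzd))
           (is_series_scal_l lam _ _ (Series_correct _ (ex_series_of_radius c z Hzc)))).
Qed.

Lemma PSeries_quotient_lt (c d : nat -> R) (u v : R) :
  (forall n, 0 < c n) -> (forall n, d n / c n < d (S n) / c (S n)) ->
  0 < u < v -> Rbar_lt v (CV_radius c) -> Rbar_lt v (CV_radius d) ->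
  PSeries d u / PSeries c u < PSeries d v / PSeries c v.
Proof.
  intros Hc Hdc Huv Hvc Hvd.
  assert (Hin : forall a z, 0 <= z <= v -> Rbar_lt v (CV_radius a) ->
                  Rbar_lt (Rabs z) (CV_radius a)).
  { intros a z Hz Ha; rewrite Rabs_pos_eq by lra.
    apply Rbar_le_lt_trans with v; [simpl; lra | exact Ha]. }
  assert (Hc0 : forall n, c n <> 0) by (intros n; apply Rgt_not_eq, Hc).
  assert (Fu : 0 < PSeries c u)
    by (apply PSeries_pos; [exact Hc | lra | apply Hin; [lra | exact Hvc]]).
  assert (Fv : 0 < PSeries c v)
    by (apply PSeries_pos; [exact Hc | lra | apply Hin; [lra | exact Hvc]]).
  set (lam := PSeries d v / PSeries c v).
  set (r := fun n => d n / c n - lam).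
  assert (Hser : forall z, 0 <= z <= v ->
            is_series (fun n => r n * (c n * z ^ n)) (PSeries d z - lam * PSeries c z)).
  { intros z Hz; apply is_series_quotient_shift; [exact Hc0 | apply Hin; auto ..]. }
  assert (Hv := Hser v ltac:(lra)).
  assert (Hu := Hser u ltac:(lra)).
  assert (Edamp : forall n, r n * (c n * v ^ n * (u / v) ^ n) = r n * (c n * u ^ n)).
  { intros n; rewrite Rmult_assoc, <- Rpow_mult_distr.
    replace (v * (u / v)) with u by (field; lra); reflexivity. }
  assert (Hneg : Series (fun n => r n * (c n * u ^ n)) < 0).
  { rewrite <- (Series_ext _ _ Edamp).
    apply Series_damped_neg.
    - intros n; apply Rmult_lt_0_compat; [apply Hc | apply pow_lt; lra].
    - intros n; unfold r; specialize (Hdc n); lra.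
    - split; [apply Rdiv_lt_0_compat; lra | apply (Rdiv_lt_1 u v); lra].
    - eexists; exact Hv.
    - eapply ex_series_ext; [intros n; symmetry; apply Edamp | eexists; exact Hu].
    - rewrite (is_series_unique _ _ Hv); unfold lam; field; lra. }
  rewrite (is_series_unique _ _ Hu) in Hneg.
  apply (Rmult_lt_reg_r (PSeries c u)); [exact Fu|].
  fold lam; unfold Rdiv; rewrite Rmult_assoc, Rinv_l by lra; lra.
Qed.

Lemma strictly_convex_of_derive_increasing (g g' : R -> R) (lo hi : R) :
  (forall z, lo < z < hi -> derivable_pt_lim g z (g' z)) ->
  (forall u v, lo < u -> u < v -> v < hi -> g' u < g' v) ->
  forall x y t, lo < x < hi -> lo < y < hi -> x <> y -> 0 < t < 1 ->
  g (t * x + (1 - t) * y) < t * g x + (1 - t) * g y.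
Proof.
  intros Hd Hmono.
  assert (Hlt : forall x y t, lo < x -> x < y -> y < hi -> 0 < t < 1 ->
            g (t * x + (1 - t) * y) < t * g x + (1 - t) * g y).
  { intros x y t Hx Hxy Hy Ht.
    set (z := t * x + (1 - t) * y).
    assert (Hxz : x < z) by (unfold z; nra).
    assert (Hzy : z < y) by (unfold z; nra).
    destruct (MVT_cor2 g g' x z Hxz) as [u [Eu Hu]]; [intros w Hw; apply Hd; lra|].
    destruct (MVT_cor2 g g' z y Hzy) as [v [Ev Hv]]; [intros w Hw; apply Hd; lra|].
    assert (Hg' : g' u < g' v) by (apply Hmono; lra).
    assert (E : t * g x + (1 - t) * g y - g z = t * (1 - t) * (y - x) * (g' v - g' u)).
    { replace (g x) with (g z - g' u * (z - x)) by lra.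
      replace (g y) with (g z + g' v * (y - z)) by lra.
      unfold z; ring. }
    assert (0 < t * (1 - t) * (y - x) * (g' v - g' u))
      by (repeat apply Rmult_lt_0_compat; lra).
    lra. }
  intros x y t Hx Hy Hxy Ht.
  destruct (Rdichotomy x y Hxy) as [H | H]; [apply Hlt; lra|].
  replace (t * x + (1 - t) * y) with ((1 - t) * y + (1 - (1 - t)) * x) by ring.
  replace (t * g x + (1 - t) * g y) with ((1 - t) * g y + (1 - (1 - t)) * g x) by ring.
  apply Hlt; lra.
Qed.

Section LogConvexPSeries.

Variable c : nat -> R.
Hypothesis c_pos : forall n, 0 < c n.
Hypothesis c_radius : Rbar_le 1 (CV_radius c).

Lemma abs_lt_CV_radius (x : R) : Rabs x < 1 -> Rbar_lt (Rabs x) (CV_radius c).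
Proof. intros Hx; now apply Rbar_lt_le_trans with 1. Qed.

Lemma PSeries_pos_01 (x : R) : 0 <= x < 1 -> 0 < PSeries c x.
Proof.
  intros Hx; apply PSeries_pos; [exact c_pos | lra |].
  apply abs_lt_CV_radius; rewrite Rabs_pos_eq; lra.
Qed.

Lemma derivable_pt_lim_ln_PSeries (x : R) : 0 <= x < 1 ->
  derivable_pt_lim (fun z => ln (PSeries c z)) x (PSeries (PS_derive c) x / PSeries c x).
Proof.
  intros Hx.
  assert (HF := PSeries_pos_01 x Hx).
  assert (HD : derivable_pt_lim (PSeries c) x (PSeries (PS_derive c) x)).
  { apply is_derive_Reals, is_derive_PSeries, abs_lt_CV_radius; rewrite Rabs_pos_eq; lra. }
  replace (PSeries (PS_derive c) x / PSeries c x) with (/ PSeries c x * PSeries (PS_derive c) x)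
    by (field; lra).
  exact (derivable_pt_lim_comp _ ln x _ _ HD (derivable_pt_lim_ln _ HF)).
Qed.

Lemma PSeries_quotient_lt_01 (d : nat -> R) (u v : R) :
  (forall n, d n / c n < d (S n) / c (S n)) -> CV_radius d = CV_radius c ->
  0 < u -> u < v -> v < 1 ->
  PSeries d u / PSeries c u < PSeries d v / PSeries c v.
Proof.
  intros Hdc Hrd Hu Huv Hv.
  assert (Hin : Rbar_lt v (CV_radius c)).
  { replace v with (Rabs v) at 1 by (apply Rabs_pos_eq; lra); apply abs_lt_CV_radius.
    rewrite Rabs_pos_eq; lra. }
  apply PSeries_quotient_lt; auto; now rewrite Hrd.
Qed.

Lemma PSeries_strictly_log_convex :
  (forall n, PS_derive c n / c n < PS_derive c (S n) / c (S n)) ->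
  strictly_log_convex_on open01 (PSeries c).
Proof.
  intros Hmono; split; [intros x Hx; apply PSeries_pos_01; unfold open01 in Hx; lra|].
  intros x y t Hx Hy Hxy Ht.
  apply (strictly_convex_of_derive_increasing (fun z => ln (PSeries c z))
           (fun z => PSeries (PS_derive c) z / PSeries c z) 0 1);
    auto.
  - intros z Hz; apply derivable_pt_lim_ln_PSeries; lra.
  - intros u v Hu Huv Hv; apply PSeries_quotient_lt_01; auto; apply CV_radius_derive.
Qed.

Lemma PSeries_strictly_log_concave :
  (forall n, PS_derive c (S n) / c (S n) < PS_derive c n / c n) ->
  strictly_log_concave_on open01 (PSeries c).
Proof.
  intros Hmono; split; [intros x Hx; apply PSeries_pos_01; unfold open01 in Hx; lra|].
  intros x y t Hx Hy Hxy Ht.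
  enough (- ln (PSeries c (t * x + (1 - t) * y)) <
          t * - ln (PSeries c x) + (1 - t) * - ln (PSeries c y)) by lra.
  apply (strictly_convex_of_derive_increasing (fun z => - ln (PSeries c z))
           (fun z => PSeries (PS_opp (PS_derive c)) z / PSeries c z) 0 1); auto.
  - intros z Hz; rewrite PSeries_opp, Rdiv_opp_l.
    apply derivable_pt_lim_opp, derivable_pt_lim_ln_PSeries; lra.
  - intros u v Hu Huv Hv; apply PSeries_quotient_lt_01; auto.
    + intros n; unfold PS_opp; simpl; rewrite !Rdiv_opp_l; specialize (Hmono n); lra.
    + now rewrite CV_radius_opp, CV_radius_derive.
Qed.

End LogConvexPSeries.

Lemma finite_bound (f : nat -> R) (n : nat) : exists M, forall k, (k < n)%nat -> f k <= M.
Proof.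
  induction n as [|n [M HM]]; [exists 0; intros; lia|].
  exists (Rmax M (f n)); intros k Hk.
  destruct (Nat.eq_dec k n) as [->|Hkn]; [apply Rmax_r|].
  eapply Rle_trans; [apply HM; lia | apply Rmax_l].
Qed.

Lemma CV_radius_ge_of_eventually_decreasing (c : nat -> R) (r : R) (N : nat) :
  (forall n, 0 < c n) -> 0 < r -> (forall n, (N <= n)%nat -> c (S n) * r <= c n) ->
  Rbar_le r (CV_radius c).
Proof.
  intros Hc Hr Hdecr.
  set (u := fun n => c n * r ^ n).
  assert (Hu : forall n, 0 <= u n)
    by (intros n; left; apply Rmult_lt_0_compat; [apply Hc | now apply pow_lt]).
  assert (Htail : forall k, u (N + k)%nat <= u N).
  { induction k as [|k IH]; [rewrite Nat.add_0_r; lra|].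
    rewrite Nat.add_succ_r; eapply Rle_trans; [|exact IH]; unfold u; simpl.
    assert (0 < r ^ (N + k)) by now apply pow_lt.
    specialize (Hdecr (N + k)%nat ltac:(lia)).
    replace (c (S (N + k)) * (r * r ^ (N + k))) with (c (S (N + k)) * r * r ^ (N + k)) by ring.
    apply Rmult_le_compat_r; lra. }
  destruct (finite_bound u N) as [M HM].
  apply (proj1 (CV_radius_bounded c)); exists (Rmax M (u N)); intros n.
  rewrite Rabs_pos_eq by apply Hu.
  destruct (Compare_dec.le_lt_dec N n) as [HNn | HnN].
  - replace n with (N + (n - N))%nat by lia.
    eapply Rle_trans; [apply Htail | apply Rmax_r].
  - eapply Rle_trans; [apply HM, HnN | apply Rmax_l].
Qed.

Lemma CV_radius_ge_1_of_ratio (c beta : nat -> R) :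
  (forall n, 0 < c n) -> (forall n, c (S n) <= beta n * c n) -> is_lim_seq beta 1 ->
  Rbar_le 1 (CV_radius c).
Proof.
  intros Hc Hbeta Hlim.
  assert (Hr : forall r, 0 < r < 1 -> Rbar_le r (CV_radius c)).
  { intros r Hr.
    assert (Heps : 0 < / r - 1).
    { enough (1 < / r) by lra; rewrite <- Rinv_1; apply Rinv_lt_contravar; lra. }
    apply is_lim_seq_spec in Hlim; destruct (Hlim (mkposreal _ Heps)) as [N HN].
    apply (CV_radius_ge_of_eventually_decreasing c r N Hc (proj1 Hr)).
    intros n Hn; specialize (HN n Hn); simpl in HN; apply Rabs_def2 in HN.
    specialize (Hbeta n); specialize (Hc n).
    apply Rle_trans with (beta n * c n * r); [apply Rmult_le_compat_r; lra|].
    replace (c n) with (/ r * c n * r) at 2 by (field; lra).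
    apply Rmult_le_compat_r; [lra | apply Rmult_le_compat_r; lra]. }
  assert (H0 := CV_radius_ge_0 c).
  revert Hr H0; destruct (CV_radius c) as [R0| |]; simpl; intros Hr H0; [|trivial|contradiction].
  apply Rnot_lt_le; intros HR0.
  specialize (Hr ((R0 + 1) / 2) ltac:(lra)); simpl in Hr; lra.
Qed.

Lemma is_lim_seq_pow (u : nat -> R) (l : R) (m : nat) :
  is_lim_seq u l -> is_lim_seq (fun n => u n ^ m) (l ^ m).
Proof.
  intros Hu; induction m as [|m IH]; [apply is_lim_seq_const|].
  exact (is_lim_seq_mult' _ _ _ _ Hu IH).
Qed.

Lemma is_lim_seq_shift_quotient (A B : R) :
  0 < B -> is_lim_seq (fun n => (A + INR n) / (B + INR n)) 1.
Proof.
  intros HB.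
  assert (Hpos : forall n, 0 < B + INR n) by (intros n; pose proof (pos_INR n); lra).
  apply is_lim_seq_ext with (fun n => 1 + (A - B) * / (B + INR n)).
  { intros n; specialize (Hpos n); field; lra. }
  replace (Finite 1) with (Finite (1 + (A - B) * 0)) by (f_equal; ring).
  apply is_lim_seq_plus'; [apply is_lim_seq_const|].
  apply (is_lim_seq_mult' _ _ (A - B) 0); [apply is_lim_seq_const|].
  replace (Finite 0) with (Rbar_inv p_infty) by reflexivity.
  apply is_lim_seq_inv; [|discriminate].
  eapply is_lim_seq_plus; [apply is_lim_seq_const | apply is_lim_seq_INR | reflexivity].
Qed.

Lemma prodR_pos (f : nat -> R) (n : nat) :
  (forall k, (k < n)%nat -> 0 < f k) -> 0 < prodR f n.
Proof.
  induction n as [|n IH]; intros Hf; simpl; [lra|].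
  apply Rmult_lt_0_compat; [apply IH; intros k Hk|]; apply Hf; lia.
Qed.

Lemma prodR_le (f g : nat -> R) (n : nat) :
  (forall k, (k < n)%nat -> 0 < f k <= g k) -> prodR f n <= prodR g n.
Proof.
  induction n as [|n IH]; intros Hfg; simpl; [lra|].
  assert (0 < prodR f n) by (apply prodR_pos; intros k Hk; apply Hfg; lia).
  assert (prodR f n <= prodR g n) by (apply IH; intros k Hk; apply Hfg; lia).
  destruct (Hfg n ltac:(lia)); apply Rmult_le_compat; lra.
Qed.

Lemma prodR_lt (f g : nat -> R) (n : nat) :
  (forall k, (k < n)%nat -> 0 < f k <= g k) -> (exists k, (k < n)%nat /\ f k < g k) ->
  prodR f n < prodR g n.
Proof.
  induction n as [|n IH]; intros Hfg [k [Hk Hlt]]; [lia|]; simpl.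
  assert (0 < prodR f n) by (apply prodR_pos; intros j Hj; apply Hfg; lia).
  assert (prodR f n <= prodR g n) by (apply prodR_le; intros j Hj; apply Hfg; lia).
  destruct (Hfg n ltac:(lia)).
  destruct (Nat.eq_dec k n) as [->|Hkn]; [nra|].
  assert (prodR f n < prodR g n).
  { apply IH; [intros j Hj; apply Hfg; lia | exists k; split; [lia | exact Hlt]]. }
  nra.
Qed.

Lemma prodR_const (x : R) (n : nat) : prodR (fun _ => x) n = x ^ n.
Proof. induction n as [|n IH]; simpl; [reflexivity|]; rewrite IH; ring. Qed.

Lemma prodR_mul (f g : nat -> R) (n : nat) :
  prodR (fun k => f k * g k) n = prodR f n * prodR g n.
Proof. induction n as [|n IH]; simpl; [ring|]; rewrite IH; ring. Qed.

Lemma prodR_div (f g : nat -> R) (n : nat) : (forall k, (k < n)%nat -> 0 < g k) ->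
  prodR (fun k => f k / g k) n = prodR f n / prodR g n.
Proof.
  induction n as [|n IH]; intros Hg; simpl; [field|].
  assert (0 < prodR g n) by (apply prodR_pos; intros k Hk; apply Hg; lia).
  assert (0 < g n) by (apply Hg; lia).
  rewrite IH by (intros k Hk; apply Hg; lia); field; lra.
Qed.

Lemma prodR_add (f : nat -> R) (m l : nat) :
  prodR f (m + l) = prodR f m * prodR (fun j => f (m + j)%nat) l.
Proof.
  induction l as [|l IH]; simpl; [rewrite Nat.add_0_r; ring|].
  rewrite Nat.add_succ_r; simpl; rewrite IH; ring.
Qed.

Lemma poch_pos (x : R) (n : nat) : 0 < x -> 0 < poch x n.
Proof.
  intros Hx; induction n as [|n IH]; simpl; [lra|].
  apply Rmult_lt_0_compat; [exact IH | pose proof (pos_INR n); lra].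
Qed.

Lemma prodR_shift_pos (u : nat -> R) (l n : nat) :
  (forall k, (k < l)%nat -> 0 < u k) -> 0 < prodR (fun k => u k + INR n) l.
Proof.
  intros Hu; apply prodR_pos; intros k Hk; specialize (Hu k Hk); pose proof (pos_INR n); lra.
Qed.

Definition hyp_ratio (l m : nat) (u v : nat -> R) (n : nat) : R :=
  prodR (fun k => u k + INR n) l / prodR (fun k => v k + INR n) m.

Lemma hyp_ratio_pos (l m : nat) (u v : nat -> R) (n : nat) :
  (forall k, (k < l)%nat -> 0 < u k) -> (forall k, (k < m)%nat -> 0 < v k) ->
  0 < hyp_ratio l m u v n.
Proof. intros Hu Hv; apply Rdiv_lt_0_compat; apply prodR_shift_pos; assumption. Qed.

Lemma hyp_ratio_inv (l m : nat) (u v : nat -> R) (n : nat) :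
  / hyp_ratio l m u v n = hyp_ratio m l v u n.
Proof. apply Rinv_div. Qed.

Lemma shift_quotient_succ (x y : R) (n : nat) : 0 < y ->
  (x + INR (S n)) / (y + INR (S n)) =
  (x + INR n) / (y + INR n) + (y - x) / ((y + INR n) * (y + INR n + 1)).
Proof. intros Hy; pose proof (pos_INR n); rewrite S_INR; field; lra. Qed.

Lemma shift_quotient_le (x y : R) (n : nat) : 0 < x <= y ->
  0 < (x + INR n) / (y + INR n) <= (x + INR (S n)) / (y + INR (S n)).
Proof.
  intros Hxy; pose proof (pos_INR n).
  rewrite shift_quotient_succ by lra; split; [apply Rdiv_lt_0_compat; lra|].
  enough (0 <= (y - x) / ((y + INR n) * (y + INR n + 1))) by lra.
  apply Rdiv_le_0_compat; [lra | apply Rmult_lt_0_compat; lra].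
Qed.

Lemma shift_quotient_lt (x y : R) (n : nat) : 0 < x < y ->
  (x + INR n) / (y + INR n) < (x + INR (S n)) / (y + INR (S n)).
Proof.
  intros Hxy; pose proof (pos_INR n).
  rewrite shift_quotient_succ by lra.
  enough (0 < (y - x) / ((y + INR n) * (y + INR n + 1))) by lra.
  apply Rdiv_lt_0_compat; [lra | apply Rmult_lt_0_compat; lra].
Qed.

Lemma hyp_ratio_increasing (l m : nat) (u v : nat -> R) :
  (m <= l)%nat -> (forall k, (k < l)%nat -> 0 < u k) -> (forall k, (k < m)%nat -> 0 < v k) ->
  (forall k, (k < m)%nat -> u k <= v k) ->
  (m < l)%nat \/ (exists k, (k < m)%nat /\ u k < v k) ->
  forall n, hyp_ratio l m u v n < hyp_ratio l m u v (S n).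
Proof.
  intros Hml Hu Hv Huv Hstrict n.
  set (P i := prodR (fun k => (u k + INR i) / (v k + INR i)) m).
  set (T i := prodR (fun j => u (m + j)%nat + INR i) (l - m)).
  assert (E : forall i, hyp_ratio l m u v i = P i * T i).
  { intros i; unfold hyp_ratio, P, T.
    assert (Hvi : forall k, (k < m)%nat -> 0 < v k + INR i)
      by (intros k Hk; specialize (Hv k Hk); pose proof (pos_INR i); lra).
    assert (0 < prodR (fun k => v k + INR i) m) by (apply prodR_shift_pos; exact Hv).
    replace l with (m + (l - m))%nat at 1 by lia.
    rewrite prodR_add, prodR_div by exact Hvi; field; lra. }
  assert (HuT : forall j, (j < l - m)%nat -> 0 < u (m + j)%nat) by (intros j Hj; apply Hu; lia).
  assert (HT : 0 < T n <= T (S n)).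
  { split; [apply prodR_shift_pos; exact HuT|].
    apply prodR_le; intros j Hj; specialize (HuT j Hj); pose proof (pos_INR n).
    rewrite S_INR; lra. }
  assert (HP : 0 < P n <= P (S n)).
  { split; [apply prodR_pos | apply prodR_le]; intros k Hk;
      apply shift_quotient_le; split; auto; apply Hu; lia. }
  rewrite !E; destruct Hstrict as [Hlt | Hex].
  - assert (T n < T (S n)).
    { apply prodR_lt; [|exists 0%nat; split; [lia | rewrite S_INR; lra]].
      intros j Hj; specialize (HuT j Hj); pose proof (pos_INR n); rewrite S_INR; lra. }
    nra.
  - assert (P n < P (S n)).
    { apply prodR_lt; [intros k Hk; apply shift_quotient_le; split; auto; apply Hu; lia|].
      destruct Hex as [k [Hk Hlt]]; exists k; split; [exact Hk|].
      apply shift_quotient_lt; split; [apply Hu; lia | exact Hlt]. }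
    nra.
Qed.

Lemma hyp_ratio_div_succ_le (l m : nat) (u v : nat -> R) (A B : R) (n : nat) :
  (l <= S m)%nat -> 1 <= A -> 0 < B <= 1 ->
  (forall k, (k < l)%nat -> 0 < u k <= A) -> (forall k, (k < m)%nat -> B <= v k) ->
  hyp_ratio l m u v n / INR (S n) <= ((A + INR n) / (B + INR n)) ^ S m.
Proof.
  intros Hlm HA HB Hu Hv; pose proof (pos_INR n).
  assert (Hnum : prodR (fun k => u k + INR n) l <= (A + INR n) ^ S m).
  { apply Rle_trans with ((A + INR n) ^ l); [|apply Rle_pow; [lra | exact Hlm]].
    rewrite <- prodR_const; apply prodR_le; intros k Hk; specialize (Hu k Hk); lra. }
  assert (Hden : (B + INR n) ^ S m <= prodR (fun k => v k + INR n) m * INR (S n)).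
  { change ((B + INR n) ^ S m) with ((B + INR n) * (B + INR n) ^ m).
    rewrite Rmult_comm, S_INR.
    apply Rmult_le_compat; [apply pow_le; lra | lra | | lra].
    rewrite <- prodR_const; apply prodR_le; intros k Hk; specialize (Hv k Hk); lra. }
  assert (0 < (B + INR n) ^ S m) by (apply pow_lt; lra).
  assert (0 < prodR (fun k => v k + INR n) m)
    by (apply prodR_pos; intros k Hk; specialize (Hv k Hk); lra).
  assert (0 < INR (S n)) by (apply lt_0_INR; lia).
  unfold hyp_ratio; unfold Rdiv at 3; rewrite Rpow_mult_distr, pow_inv.
  replace (prodR (fun k => u k + INR n) l / prodR (fun k => v k + INR n) m / INR (S n))
    with (prodR (fun k => u k + INR n) l * / (prodR (fun k => v k + INR n) m * INR (S n)))
    by (field; split; apply Rgt_not_eq; assumption).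
  apply Rmult_le_compat; [left; apply prodR_shift_pos; intros k Hk; apply Hu, Hk | | exact Hnum |].
  - left; apply Rinv_0_lt_compat; lra.
  - apply Rinv_le_contravar; lra.
Qed.

Section Hypergeometric.

Variables (p q : nat) (a b : nat -> R).
Hypothesis a_pos : forall k, (k < p)%nat -> 0 < a k.
Hypothesis b_pos : forall k, (k < q)%nat -> 0 < b k.

Lemma hypcoef_pos (n : nat) : 0 < hypcoef p q a b n.
Proof.
  unfold hypcoef; repeat apply Rdiv_lt_0_compat.
  - apply prodR_pos; intros k Hk; apply poch_pos, a_pos, Hk.
  - apply prodR_pos; intros k Hk; apply poch_pos, b_pos, Hk.
  - apply lt_0_INR, Factorial.lt_O_fact.
Qed.

Lemma PS_derive_hypcoef (n : nat) :
  PS_derive (hypcoef p q a b) n = hyp_ratio p q a b n * hypcoef p q a b n.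
Proof.
  unfold PS_derive, hypcoef, hyp_ratio; cbn [poch].
  rewrite !prodR_mul.
  change (Factorial.fact (S n)) with (S n * Factorial.fact n)%nat; rewrite mult_INR.
  assert (0 < prodR (fun k => poch (b k) n) q)
    by (apply prodR_pos; intros k Hk; apply poch_pos, b_pos, Hk).
  assert (0 < prodR (fun k => b k + INR n) q) by (apply prodR_shift_pos; exact b_pos).
  assert (0 < INR (S n)) by (apply lt_0_INR; lia).
  assert (0 < INR (Factorial.fact n)) by (apply lt_0_INR, Factorial.lt_O_fact).
  field; repeat split; apply Rgt_not_eq; assumption.
Qed.

Lemma CV_radius_hypcoef : (p <= q + 1)%nat -> Rbar_le 1 (CV_radius (hypcoef p q a b)).
Proof.
  intros Hpq.
  destruct (finite_bound a p) as [A0 HA0]; destruct (finite_bound (fun k => / b k) q) as [B0 HB0].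
  set (A := Rmax 1 A0); set (M := Rmax 1 B0).
  assert (HA : 1 <= A) by apply Rmax_l.
  assert (HM : 1 <= M) by apply Rmax_l.
  assert (HB : 0 < / M <= 1).
  { split; [apply Rinv_0_lt_compat; lra|]; rewrite <- Rinv_1; apply Rinv_le_contravar; lra. }
  apply (CV_radius_ge_1_of_ratio _ (fun n => ((A + INR n) / (/ M + INR n)) ^ S q)).
  - exact hypcoef_pos.
  - intros n.
    assert (E : hypcoef p q a b (S n) = hyp_ratio p q a b n / INR (S n) * hypcoef p q a b n).
    { assert (D := PS_derive_hypcoef n); unfold PS_derive in D.
      assert (0 < INR (S n)) by (apply lt_0_INR; lia).
      apply (Rmult_eq_reg_l (INR (S n))); [rewrite D; field |]; lra. }
    rewrite E; apply Rmult_le_compat_r; [left; apply hypcoef_pos|].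
    apply hyp_ratio_div_succ_le; [lia | exact HA | exact HB | |].
    + intros k Hk; split; [apply a_pos, Hk|].
      eapply Rle_trans; [apply HA0, Hk | apply Rmax_r].
    + intros k Hk; specialize (b_pos k Hk).
      rewrite <- (Rinv_inv (b k)); apply Rinv_le_contravar; [apply Rinv_0_lt_compat, b_pos|].
      eapply Rle_trans; [apply HB0, Hk | apply Rmax_r].
  - rewrite <- (pow1 (S q)); apply is_lim_seq_pow, is_lim_seq_shift_quotient; lra.
Qed.

Lemma hypF_strictly_log_convex : (p <= q + 1)%nat ->
  (forall n, hyp_ratio p q a b n < hyp_ratio p q a b (S n)) ->
  strictly_log_convex_on open01 (hypF p q a b).
Proof.
  intros Hpq Hr; apply PSeries_strictly_log_convex;
    [exact hypcoef_pos | now apply CV_radius_hypcoef |].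
  intros n; unfold Rdiv.
  rewrite !PS_derive_hypcoef, !Rmult_assoc, !Rinv_r, !Rmult_1_r
    by apply Rgt_not_eq, hypcoef_pos.
  apply Hr.
Qed.

Lemma hypF_strictly_log_concave : (p <= q + 1)%nat ->
  (forall n, hyp_ratio q p b a n < hyp_ratio q p b a (S n)) ->
  strictly_log_concave_on open01 (hypF p q a b).
Proof.
  intros Hpq Hr; apply PSeries_strictly_log_concave;
    [exact hypcoef_pos | now apply CV_radius_hypcoef |].
  intros n; unfold Rdiv.
  rewrite !PS_derive_hypcoef, !Rmult_assoc, !Rinv_r, !Rmult_1_r
    by apply Rgt_not_eq, hypcoef_pos.
  rewrite <- !(hyp_ratio_inv q p b a); apply Rinv_lt_contravar; [|apply Hr].
  apply Rmult_lt_0_compat; apply hyp_ratio_pos; assumption.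
Qed.

End Hypergeometric.

Lemma log_concave_of_strictly (I : R -> Prop) (f : R -> R) :
  strictly_log_concave_on I f -> log_concave_on I f.
Proof.
  intros [Hpos Hconc]; split; [exact Hpos|].
  intros x y t Hx Hy Ht.
  destruct (Req_dec x y) as [<-|Hxy]; [|left; now apply Hconc].
  replace (t * x + (1 - t) * x) with x by ring; right; ring.
Qed.

Lemma hypF_0_0 (a b : nat -> R) (x : R) : hypF 0 0 a b x = exp x.
Proof.
  rewrite exp_Reals; apply PSeries_ext; intros n; unfold hypcoef; simpl.
  field; apply not_0_INR, Nat.neq_0_lt_0, Factorial.lt_O_fact.
Qed.

Theorem theorem3p15 (p q : nat) (a b : nat -> R)
  (ha : forall k, (k < p)%nat -> 0 < a k)
  (hb : forall k, (k < q)%nat -> 0 < b k)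
  (hpq : (p <= q + 1)%nat) :
  (* (1) *)
  ((p = 0 /\ q = 0)%nat ->
     (forall x, openm11 x -> hypF p q a b x = exp x) /\
     log_convex_on openm11 (hypF p q a b)) /\
  (* (2) *)
  ((p = q)%nat -> (1 <= p)%nat ->
     ((forall k, (k < p)%nat -> a k <= b k) ->
      (exists k, (k < p)%nat /\ a k < b k) ->
      strictly_log_convex_on open01 (hypF p q a b)) /\
     ((forall k, (k < p)%nat -> b k <= a k) ->
      (exists k, (k < p)%nat /\ b k < a k) ->
      strictly_log_concave_on open01 (hypF p q a b))) /\
  (* (3) *)
  ((q < p)%nat ->
     (forall k, (k < q)%nat -> a k <= b k) ->
     (exists k, (k < q)%nat /\ a k < b k) ->
     strictly_log_convex_on open01 (hypF p q a b)) /\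
  (* (4) *)
  ((1 <= p)%nat -> (p < q)%nat ->
     (forall k, (k < p)%nat -> b k <= a k) ->
     (exists k, (k < p)%nat /\ b k < a k) ->
     strictly_log_concave_on open01 (hypF p q a b)) /\
  (* (5) *)
  ((p = 0)%nat -> (1 <= q)%nat ->
     log_concave_on open01 (hypF p q a b)).
Proof.
  split; [|split; [|split; [|split]]].
  - intros [-> ->]; split; [intros x _; apply hypF_0_0|].
    split; [intros x _; rewrite hypF_0_0; apply exp_pos|].
    intros x y t _ _ _; rewrite !hypF_0_0, !ln_exp; right; ring.
  - intros <- _; split; intros Hle Hlt.
    + apply hypF_strictly_log_convex; try assumption.
      apply hyp_ratio_increasing; [lia | exact ha | exact hb | exact Hle | right; exact Hlt].
    + apply hypF_strictly_log_concave; try assumption.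
      apply hyp_ratio_increasing; [lia | exact hb | exact ha | exact Hle | right; exact Hlt].
  - intros Hqp Hle _; apply hypF_strictly_log_convex; try assumption.
    apply hyp_ratio_increasing; [lia | exact ha | exact hb | exact Hle | left; exact Hqp].
  - intros _ Hpq Hle _; apply hypF_strictly_log_concave; try assumption.
    apply hyp_ratio_increasing; [lia | exact hb | exact ha | exact Hle | left; exact Hpq].
  - intros -> Hq; apply log_concave_of_strictly, hypF_strictly_log_concave; try assumption.
    apply hyp_ratio_increasing; [lia | exact hb | exact ha | intros; lia | left; lia].
Qed.
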